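(* The filter $\mathscr F^{\mathrm{1cas}}_{\rho}$ is a normal filter of subgroups of $\mathscr G^{\mathrm{1cas}}_{\rho}$ (i.e. it is closed under conjugation by elements of $\mathscr G^{\mathrm{1cas}}_{\rho}$).
   Context: $\rho:\omega_1\setminus\{0\}\to\omega_1$ is a regressive map, $\operatorname{Succ}_\rho(\xi)=\{\eta:\rho(\eta)=\xi\}$, $\operatorname{cl}_\rho(A)$ the least superset of $A$ closed under $\rho$. $\mathbb P_1=\operatorname{Fn}(\omega_1\times\omega\times\omega,2,{<}\omega)$. For $\xi<\omega_1$, $i<\omega$, $s\subseteq\omega$ finite or cofinite, $\tau^{\mathrm{1cas}}_{\xi,i,s}$ is the automorphism of $\mathbb P_1$ flipping the value of a condition at each coordinate $(\zeta,i,n)$ with $n\in s$ and $\zeta\in\{\xi\}\cup\operatorname{Succ}_\rho(\xi)$. $\mathscr G^{\mathrm{1cas}}_\rho$ is the group generated by these automorphisms. For $A\subseteq\omega_1$, $\operatorname{Fix}^{\mathrm{1cas}}_\rho(A)$ is the subgroup of elements acting trivially on all coordinates $(\zeta,j,n)$ with $\zeta\in\operatorname{cl}_\rho(A)$. $\mathscr F^{\mathrm{1cas}}_\rho$ is the filter of subgroups generated by the $\operatorname{Fix}^{\mathrm{1cas}}_\rho(A)$ for countable $A\subseteq\omega_1$. *)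

From Stdlib Require Import Classical ClassicalEpsilon List Arith.
Set Implicit Arguments.

Section OneCas.

(* [W] with strict order [lt] and least element [z] plays the role of omega_1
   (see [is_omega1]); [z] is the ordinal 0. *)
Variables (W : Type) (lt : W -> W -> Prop) (z : W).

Definition countable (A : W -> Prop) : Prop :=
  exists f : W -> nat, forall x y, A x -> A y -> f x = f y -> x = y.

Definition is_omega1 : Prop :=
  (forall x, ~ lt x x) /\
  (forall x y w, lt x y -> lt y w -> lt x w) /\
  (forall x y, x = y \/ lt x y \/ lt y x) /\
  well_founded lt /\
  (forall x, ~ lt x z) /\
  ~ countable (fun _ => True) /\
  (forall x, countable (fun y => lt y x)).

Variable rho : W -> W.
(* rho is only meaningful on W \ {z} (its value at z is irrelevant) *)
Definition regressive : Prop := forall eta, eta <> z -> lt (rho eta) eta.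

Definition Succ (xi : W) (eta : W) : Prop := eta <> z /\ rho eta = xi.

Inductive cl (A : W -> Prop) : W -> Prop :=
| cl_base : forall x, A x -> cl A x
| cl_step : forall x, cl A x -> x <> z -> cl A (rho x).

Definition coord := (W * nat * nat)%type.

(* conditions of P_1 = Fn(omega_1 x omega x omega, 2, <omega) *)
Definition cond :=
  { p : coord -> option bool |
    exists l : list coord, forall c, p c <> None -> In c l }.

Definition pdec (P : Prop) : bool :=
  if excluded_middle_informative P then true else false.

Definition finite_or_cofinite (s : nat -> bool) : Prop :=
  (exists N, forall n, N <= n -> s n = false) \/
  (exists N, forall n, N <= n -> s n = true).

Definition flips (xi : W) (i : nat) (s : nat -> bool) (c : coord) : bool :=
  match c with
  | (zeta, j, n) => Nat.eqb j i && s n && pdec (zeta = xi \/ Succ xi zeta)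
  end.

Definition tau_fun (xi : W) (i : nat) (s : nat -> bool)
  (p : coord -> option bool) : coord -> option bool :=
  fun c => if flips xi i s c then option_map negb (p c) else p c.

Lemma tau_fun_fin xi i s (p : cond) :
  exists l : list coord, forall c, tau_fun xi i s (proj1_sig p) c <> None -> In c l.
Proof.
  destruct p as [p [l Hl]]; exists l; intros c Hc; apply Hl; simpl in Hc.
  unfold tau_fun in Hc; destruct (flips xi i s c); auto.
  destruct (p c); simpl in *; congruence.
Qed.

Definition tau (xi : W) (i : nat) (s : nat -> bool) (p : cond) : cond :=
  exist _ (tau_fun xi i s (proj1_sig p)) (tau_fun_fin xi i s p).

(* The group G^{1cas}_rho generated by the tau's, inside the group of
   automorphisms of P_1.  [Gen f finv] : f is an element of the generated
   group and finv is its inverse. *)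
Inductive Gen : (cond -> cond) -> (cond -> cond) -> Prop :=
| Gen_id : Gen (fun p => p) (fun p => p)
| Gen_tau : forall xi i s, finite_or_cofinite s ->
    Gen (tau xi i s) (tau xi i s)
| Gen_comp : forall f finv g ginv, Gen f finv -> Gen g ginv ->
    Gen (fun p => f (g p)) (fun p => ginv (finv p))
| Gen_inv : forall f finv, Gen f finv -> Gen finv f.

Definition G (f : cond -> cond) : Prop := exists finv, Gen f finv.

Definition subgroup (H : (cond -> cond) -> Prop) : Prop :=
  (forall f, H f -> G f) /\
  H (fun p => p) /\
  (forall f g, H f -> H g -> H (fun p => f (g p))) /\
  (forall f finv, H f -> Gen f finv -> H finv).

Definition Fix (A : W -> Prop) (f : cond -> cond) : Prop :=
  G f /\
  forall (p : cond) (c : coord),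
    cl A (fst (fst c)) -> proj1_sig (f p) c = proj1_sig p c.

(* F^{1cas}_rho: the filter of subgroups generated by the Fix(A), A countable:
   the subgroups containing a finite intersection of such Fix(A). *)
Definition F (H : (cond -> cond) -> Prop) : Prop :=
  subgroup H /\
  exists As : list (W -> Prop),
    Forall countable As /\
    forall f, G f -> (forall A, In A As -> Fix A f) -> H f.

Definition conj (g ginv : cond -> cond) (H : (cond -> cond) -> Prop)
  : (cond -> cond) -> Prop :=
  fun k => exists h, H h /\ k = (fun p => g (h (ginv p))).

End OneCas.

(* Every element of the group generated by the tau's flips a condition on a
   fixed set of coordinates, and these flips commute with each other.  The
   group is therefore abelian, so conjugating a subgroup of it by one of its
   elements returns the same subgroup, and every filter of its subgroups is
   normal. *)

From Stdlib Require Import FunctionalExtensionality PropExtensionality ProofIrrelevance.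
Set Implicit Arguments.

Definition flip {C : Type} (b : C -> bool) (q : C -> option bool) : C -> option bool :=
  fun c => if b c then option_map negb (q c) else q c.

Lemma flip_xor {C : Type} (b1 b2 : C -> bool) q :
  flip b1 (flip b2 q) = flip (fun c => xorb (b1 c) (b2 c)) q.
Proof.
  apply functional_extensionality; intro c; unfold flip.
  destruct (b1 c), (b2 c), (q c) as [[|]|]; reflexivity.
Qed.

Lemma flip_comm {C : Type} (b1 b2 : C -> bool) q :
  flip b1 (flip b2 q) = flip b2 (flip b1 q).
Proof.
  apply functional_extensionality; intro c; unfold flip.
  destruct (b1 c), (b2 c), (q c) as [[|]|]; reflexivity.
Qed.

Lemma flip_involutive {C : Type} (b : C -> bool) q : flip b (flip b q) = q.
Proof.
  apply functional_extensionality; intro c; unfold flip.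
  destruct (b c), (q c) as [[|]|]; reflexivity.
Qed.

Lemma cond_eq (W : Type) (p q : cond W) : proj1_sig p = proj1_sig q -> p = q.
Proof.
  destruct p, q; simpl; intro; subst; f_equal; apply proof_irrelevance.
Qed.

Section GenAbelian.

Variables (W : Type) (z : W) (rho : W -> W).

Lemma Gen_flip f finv : Gen z rho f finv ->
  exists b, (forall p, proj1_sig (f p) = flip b (proj1_sig p)) /\
            (forall p, proj1_sig (finv p) = flip b (proj1_sig p)).
Proof.
  induction 1 as [| xi i s _ | f finv g ginv _ [b1 [Ef Efinv]] _ [b2 [Eg Eginv]]
                 | f finv _ [b [Ef Efinv]]].
  - exists (fun _ => false); split; reflexivity.
  - exists (flips z rho xi i s); split; reflexivity.
  - exists (fun c => xorb (b1 c) (b2 c)); split; intro p.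
    + rewrite Ef, Eg, flip_xor; reflexivity.
    + rewrite Eginv, Efinv, flip_comm, flip_xor; reflexivity.
  - exists b; split; assumption.
Qed.

Lemma Gen_cancel f finv : Gen z rho f finv -> forall p, f (finv p) = p.
Proof.
  intros Hf p; destruct (Gen_flip Hf) as [b [Ef Efinv]]; apply cond_eq.
  rewrite Ef, Efinv, flip_involutive; reflexivity.
Qed.

Lemma Gen_comm f finv g ginv :
  Gen z rho f finv -> Gen z rho g ginv -> forall p, f (g p) = g (f p).
Proof.
  intros Hf Hg p; destruct (Gen_flip Hf) as [b1 [Ef _]], (Gen_flip Hg) as [b2 [Eg _]].
  apply cond_eq; rewrite Ef, Eg, Eg, Ef, flip_comm; reflexivity.
Qed.

Lemma G_conj_id g ginv h : Gen z rho g ginv -> G z rho h ->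
  (fun p => g (h (ginv p))) = h.
Proof.
  intros Hg [hinv Hh]; apply functional_extensionality; intro p.
  rewrite (Gen_comm Hg Hh), (Gen_cancel Hg); reflexivity.
Qed.

Lemma conj_subgroup_id g ginv (H : (cond W -> cond W) -> Prop) :
  Gen z rho g ginv -> subgroup z rho H -> conj g ginv H = H.
Proof.
  intros Hg [HG _]; apply functional_extensionality; intro k.
  apply propositional_extensionality; split.
  - intros [h [Hh ->]]; rewrite (G_conj_id Hg (HG h Hh)); exact Hh.
  - intro Hk; exists k; split; [exact Hk | symmetry; exact (G_conj_id Hg (HG k Hk))].
Qed.

End GenAbelian.

Theorem proposition2p8 (W : Type) (lt : W -> W -> Prop) (z : W)
  (Hw1 : is_omega1 lt z) (rho : W -> W) (Hrho : regressive lt z rho) :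
  forall (g ginv : cond W -> cond W), Gen z rho g ginv ->
  forall H : (cond W -> cond W) -> Prop,
    F z rho H -> F z rho (conj g ginv H).
Proof.
  intros g ginv Hg H HF.
  rewrite (conj_subgroup_id Hg (proj1 HF)); exact HF.
Qed.
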